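(* In the Haechi protocol (described in the context), assume the beacon shard has fewer than one third Byzantine nodes. For any two OTXs $OTX^1$ and $OTX^2$ received by the beacon chain, contained in CrossLinks $CL_1$ and $CL_2$ respectively, if either (i) $CL_1.blockTS < CL_2.blockTS$, or (ii) $CL_1 = CL_2$ and $f_{idx}(OTX^1) < f_{idx}(OTX^2)$, then Haechi orders $OTX^1$ before $OTX^2$ in the ordering phase (even if the beacon chain's leader is malicious).
   Context: Setting (Haechi). A sharded blockchain has shards $S_1,\dots,S_m$; shard $S_i$ maintains a chain $SC_i$ of blocks, $SC_i^h$ being the block at height $h$. Each block carries a publicly verifiable block timestamp, strictly increasing in block height within each shard. A beacon shard $S_0$ maintains a beacon chain via a leader-based BFT consensus. Transactions calling order-sensitive contracts are called OTXs. When shard $S_i$ handles its block at height $h$, it puts the valid new OTXs of the block, in in-block order, into a list $L_{tx}$ and sends the beacon chain a certified CrossLink $CL=\langle blockTS, L_{tx}, i, h\rangle$. $f_{idx}(\cdot)$ returns the index of a transaction within its block/CrossLink. Ordering phase: the beacon chain keeps for each shard $i$ a sequence $shardCLs[i]$ of received CrossLinks of $S_i$ with consecutive heights (CrossLinks arriving with a height gap are buffered until the gap is filled); $shardLastTS[i]$ is the timestamp of the last CrossLink in $shardCLs[i]$. Once every $shardCLs[i]$ is nonempty, an ordering cycle selects all CrossLinks in $shardCLs$ with $blockTS\le\min_i shardLastTS[i]$ and orders their OTXs by smaller block timestamp first, then by smaller index within the same CrossLink; the proposed order is accepted only through the beacon shard's BFT consensus, whose honest nodes check these rules. *)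

From mathcomp Require Import all_boot.
Set Implicit Arguments. Unset Strict Implicit. Unset Printing Implicit Defensive.

Record CrossLink (Tx : Type) := mkCL {
  blockTS : nat;
  ltx : seq Tx;       (* valid new OTXs of the block, in in-block order *)
  sid : nat;
  hgt : nat
}.

(* Shard chains: [chain i h] is the CrossLink of block SC_i^h (heights start at 0);
   timestamps strictly increase with height. *)
Definition shard_chains_ok (Tx : Type) (chain : nat -> nat -> CrossLink Tx) : Prop :=
  (forall i h, sid (chain i h) = i /\ hgt (chain i h) = h) /\
  (forall i h, blockTS (chain i h) < blockTS (chain i h.+1)).

(* An OTX is identified by (shard, height, index within the CrossLink), i.e. by
   its CrossLink (chain i h) and f_idx = k. *)
Definition otx := (nat * nat * nat)%type.

(* Beacon-chain state of the ordering phase.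
   recv : (shard, height) of every CrossLink received so far (in arrival order);
   done i : number of CrossLinks of shard i already removed from shardCLs[i]
            by previous ordering cycles (heights 0 .. done i - 1);
   log : the (accepted) global order of OTXs produced so far. *)
Record State := mkState {
  recv : seq (nat * nat);
  done : nat -> nat;
  log : seq otx
}.

Definition init_state : State := mkState [::] (fun _ => 0) [::].

Fixpoint run (p : nat -> bool) (start fuel : nat) : nat :=
  match fuel with
  | 0 => 0
  | f.+1 => if p start then (run p start.+1 f).+1 else 0
  end.

Section Haechi.
Variables (Tx : Type) (m : nat) (chain : nat -> nat -> CrossLink Tx).

(* shardCLs[i] consists of the received CrossLinks of S_i with consecutive
   heights done i, done i + 1, ..., done i + cnt s i - 1; CrossLinks received
   with a height gap stay buffered (in recv) until the gap is filled. *)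
Definition cnt (s : State) (i : nat) : nat :=
  run (fun h => (i, h) \in recv s) (done s i) (size (recv s)).

Definition shardCLs_heights (s : State) (i : nat) : seq nat :=
  iota (done s i) (cnt s i).

Definition shardLastTS (s : State) (i : nat) : nat :=
  blockTS (chain i (done s i + cnt s i).-1).

Definition minLastTS (s : State) : nat :=
  foldr minn (shardLastTS s 0) [seq shardLastTS s i | i <- iota 0 m].

Definition selH (s : State) (i : nat) : seq nat :=
  [seq h <- shardCLs_heights s i | blockTS (chain i h) <= minLastTS s].

Definition selOTX (s : State) : seq otx :=
  flatten [seq [seq (ih.1, ih.2, k) | k <- iota 0 (size (ltx (chain ih.1 ih.2)))]
          | ih <- [seq (i, h) | i <- iota 0 m, h <- selH s i]].

Definition prec (x y : otx) : bool :=
  (blockTS (chain x.1.1 x.1.2) < blockTS (chain y.1.1 y.1.2))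
  || ((x.1 == y.1) && (x.2 < y.2)).

Definition valid_proposal (s : State) (prop : seq otx) : bool :=
  [&& all (fun i => 0 < cnt s i) (iota 0 m),
      perm_eq prop (selOTX s)
    & pairwise (fun x y => ~~ prec y x) prop].

Variables (N : nat) (byz : {set 'I_N}).

(* Protocol steps: receipt of a certified CrossLink of some shard, or an
   ordering cycle whose (possibly malicious) leader's proposal is accepted by
   BFT consensus: a quorum of more than 2N/3 nodes voted for it, and an honest
   node votes only for a proposal passing the honest check. *)
Inductive step : State -> State -> Prop :=
| StepRecv (s : State) (i h : nat) :
    i < m -> step s (mkState ((i, h) :: recv s) (done s) (log s))
| StepCycle (s : State) (prop : seq otx) (Q : {set 'I_N}) :
    2 * N < 3 * #|Q| ->
    (forall v, v \in Q -> v \notin byz -> valid_proposal s prop) ->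
    step s (mkState (recv s) (fun i => done s i + size (selH s i)) (log s ++ prop)).

Inductive reachable : State -> Prop :=
| ReachInit : reachable init_state
| ReachStep s s' : reachable s -> step s s' -> reachable s'.

End Haechi.

From Pilot Require Import Defs.
From mathcomp Require Import all_boot.
From mathcomp Require Import zify.
Set Implicit Arguments. Unset Strict Implicit. Unset Printing Implicit Defensive.

(* Every accepted proposal passed the honest check, since a quorum of more than
   2N/3 nodes must contain an honest one when fewer than N/3 are Byzantine.
   The log then satisfies an invariant relative to the counters [done]: every
   OTX of a CrossLink below [done] is logged, [done] is above every height
   whose timestamp does not exceed that of a logged OTX, and the log respects
   [prec].  When a cycle appends [prop], an OTX x preceding some new y is
   either already in the log, or its timestamp is at most [minLastTS]; as
   timestamps increase with height and [shardCLs] holds consecutive heights,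
   x is then selected in the same cycle, and the pairwise check places it
   before y. *)

Lemma filter_iota_downclosed (p : pred nat) : (forall j, p j.+1 -> p j) ->
  forall d c, filter p (iota d c) = iota d (size (filter p (iota d c))).
Proof.
move=> p_down; have p_up j k : ~~ p j -> j <= k -> ~~ p k.
  move=> npj; elim: k => [|k IHk]; first by rewrite leqn0 => /eqP<-.
  by rewrite leq_eqVlt ltnS => /predU1P[<- //|/IHk]; apply: contra; apply: p_down.
move=> d c; elim: c d => [|c IHc] d //=.
case: ifP => [_|/negbT npd]; first by rewrite /= -IHc.
rewrite (@eq_in_filter _ _ pred0) ?filter_pred0 // => j.
by rewrite mem_iota => /andP[/ltnW dj _]; apply/negbTE/(p_up _ _ npd dj).
Qed.

Lemma foldr_minn_le (a x : nat) (s : seq nat) : x \in s -> foldr minn a s <= x.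
Proof.
elim: s => //= y s IHs; rewrite in_cons => /predU1P[->|/IHs]; first exact: geq_minl.
exact: leq_trans (geq_minr _ _).
Qed.

Lemma pairwise_ltn_index (T : eqType) (r : rel T) (s : seq T) :
  pairwise r s -> {in s &, forall x y, index x s < index y s -> r x y}.
Proof.
move=> r_s x y xs ys lt_xy; move/(pairwiseP x): r_s => r_s.
by have := r_s (index x s) (index y s); rewrite !inE !index_mem !nth_index //; apply.
Qed.

Lemma quorum_has_honest (T : finType) (N : nat) (Q byz : {set T}) :
  3 * #|byz| < N -> 2 * N < 3 * #|Q| -> exists2 v, v \in Q & v \notin byz.
Proof.
move=> byz_small Q_large; have [Q_byz|/subsetPn //] := boolP (Q \subset byz).
by have := subset_leq_card Q_byz; lia.
Qed.

Section Haechi.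
Variables (Tx : Type) (m : nat) (chain : nat -> nat -> CrossLink Tx).
Hypothesis chain_ok : shard_chains_ok chain.

Local Notation ts x := (blockTS (chain x.1.1 x.1.2)).
Local Notation selH := (selH m chain).
Local Notation selOTX := (selOTX m chain).
Local Notation minLastTS := (minLastTS m chain).
Local Notation prec := (prec chain).

Lemma leq_blockTS i : {mono (fun h => blockTS (chain i h)) : h h' / h <= h'}.
Proof. by apply: leq_mono; apply: homo_ltn ltn_trans _ => h; apply: chain_ok.2. Qed.

Lemma selH_iota s i : selH s i = iota (done s i) (size (selH s i)).
Proof.
apply: filter_iota_downclosed => h /= ts_h; apply: leq_trans ts_h.
by rewrite leq_blockTS.
Qed.

Lemma mem_selH s i h :
  (h \in selH s i) = (done s i <= h < done s i + size (selH s i)).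
Proof. by rewrite {1}selH_iota mem_iota. Qed.

Lemma minLastTS_le s i : i < m -> minLastTS s <= shardLastTS chain s i.
Proof. by move=> lt_im; apply/foldr_minn_le/map_f; rewrite mem_iota. Qed.

Lemma selH_cover s i h : i < m -> 0 < cnt s i ->
  blockTS (chain i h) <= minLastTS s -> h < done s i \/ h \in selH s i.
Proof.
move=> lt_im cnt_gt0 ts_h; have [|le_done_h] := ltnP h (done s i); [by left | right].
have := leq_trans ts_h (minLastTS_le s lt_im).
rewrite /shardLastTS leq_blockTS -ltnS prednK ?addn_gt0 ?cnt_gt0 ?orbT // => lt_h.
by rewrite /selH mem_filter ts_h /shardCLs_heights mem_iota le_done_h.
Qed.

Lemma mem_selOTX s i h k : ((i, h, k) \in selOTX s) =
  [&& i < m, h \in selH s i & k < size (ltx (chain i h))].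
Proof.
apply/idP/and3P => [|[lt_im hs lt_k]].
  case/flattenP => _ /mapP[_ /allpairsPdep[i' [h' [im hs ->]]] ->] /mapP[k'].
  by rewrite !mem_iota /= in im * => lt_k [-> -> ->].
apply/flattenP; exists [seq (i, h, k) | k <- iota 0 (size (ltx (chain i h)))].
  by apply/mapP; exists (i, h) => //; apply/allpairsPdep; exists i, h; rewrite mem_iota.
by apply: map_f; rewrite mem_iota.
Qed.

Lemma selOTX_ts s x : x \in selOTX s -> ts x <= minLastTS s.
Proof.
case: x => [[i h] k]; rewrite mem_selOTX => /and3P[_ + _].
by rewrite mem_filter => /andP[].
Qed.

Lemma prec_leq_ts x y : prec x y -> ts x <= ts y.
Proof. by case/orP => [/ltnW //|/andP[/eqP-> _]]. Qed.

Lemma precxx x : prec x x = false.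
Proof. by rewrite /Defs.prec ltnn eqxx ltnn. Qed.

Record ordered_log (s : State) : Prop := OrderedLog {
  recv_shard : forall i h, (i, h) \in recv s -> i < m;
  log_complete : forall i h k, i < m -> h < done s i ->
    k < size (ltx (chain i h)) -> (i, h, k) \in log s;
  done_above_log : forall x, x \in log s -> forall i h, i < m ->
    blockTS (chain i h) <= ts x -> h < done s i;
  log_prec : forall x y, y \in log s -> prec x y -> x.1.1 < m ->
    x.2 < size (ltx (chain x.1.1 x.1.2)) -> index x (log s) < index y (log s)
}.

Definition after_cycle (s : State) (prop : seq otx) : State :=
  mkState (recv s) (fun i => done s i + size (selH s i)) (log s ++ prop).

Section Cycle.
Variables (s : State) (prop : seq otx).
Hypotheses (s_ok : ordered_log s) (prop_ok : valid_proposal m chain s prop).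

Let cnt_gt0 i : i < m -> 0 < cnt s i.
Proof. by case/and3P: prop_ok => /allP cnt_gt0 _ _ lt_im; rewrite cnt_gt0 ?mem_iota. Qed.

Let mem_prop : prop =i selOTX s.
Proof. by case/and3P: prop_ok => _ /perm_mem. Qed.

Let prop_cover i h k : i < m -> blockTS (chain i h) <= minLastTS s ->
  k < size (ltx (chain i h)) -> (i, h, k) \in log s ++ prop.
Proof.
move=> lt_im ts_h lt_k; rewrite mem_cat.
case: (selH_cover lt_im (cnt_gt0 lt_im) ts_h) => [lt_h|hs].
  by rewrite (log_complete s_ok).
by rewrite mem_prop mem_selOTX lt_im hs lt_k orbT.
Qed.

Lemma log_complete_cycle i h k : i < m -> h < done (after_cycle s prop) i ->
  k < size (ltx (chain i h)) -> (i, h, k) \in log (after_cycle s prop).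
Proof.
move=> lt_im /= lt_h lt_k; rewrite mem_cat.
have [lt_done|le_done] := ltnP h (done s i); first by rewrite (log_complete s_ok).
by rewrite mem_prop mem_selOTX lt_im mem_selH le_done lt_h lt_k orbT.
Qed.

Lemma done_above_log_cycle x : x \in log (after_cycle s prop) -> forall i h, i < m ->
  blockTS (chain i h) <= ts x -> h < done (after_cycle s prop) i.
Proof.
rewrite mem_cat => /orP[x_log|x_prop] i h lt_im ts_h /=.
  by rewrite ltn_addr // (done_above_log s_ok x_log).
rewrite mem_prop in x_prop.
case: (selH_cover lt_im (cnt_gt0 lt_im) (leq_trans ts_h (selOTX_ts x_prop))).
  by move=> lt_h; rewrite ltn_addr.
by rewrite mem_selH => /andP[].
Qed.

Lemma log_prec_cycle x y : y \in log (after_cycle s prop) -> prec x y -> x.1.1 < m ->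
  x.2 < size (ltx (chain x.1.1 x.1.2)) ->
  index x (log (after_cycle s prop)) < index y (log (after_cycle s prop)).
Proof.
move=> /= y_in xy lt_x1 lt_x2; rewrite !index_cat.
have [y_log|y_log] := boolP (y \in log s).
  have lt_xy := log_prec s_ok y_log xy lt_x1 lt_x2.
  have x_log : x \in log s by rewrite -index_mem (leq_trans lt_xy) ?index_size.
  by rewrite x_log.
rewrite mem_cat (negbTE y_log) /= in y_in.
have [x_log|x_log] := boolP (x \in log s); first by rewrite ltn_addr ?index_mem.
have x_prop : x \in prop.
  have y_sel : y \in selOTX s by rewrite -mem_prop.
  have := prop_cover lt_x1 (leq_trans (prec_leq_ts xy) (selOTX_ts y_sel)) lt_x2.
  by rewrite -!surjective_pairing mem_cat (negbTE x_log).
case/and3P: prop_ok => _ _ /pairwise_ltn_index prop_sorted.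
rewrite ltn_add2l; case: ltngtP => // [lt_yx|eq_xy].
  by have := prop_sorted y x y_in x_prop lt_yx; rewrite xy.
by move: xy; rewrite -(nth_index x x_prop) eq_xy nth_index // precxx.
Qed.

Lemma ordered_log_after_cycle : ordered_log (after_cycle s prop).
Proof.
split; [exact: recv_shard s_ok | exact: log_complete_cycle
       | exact: done_above_log_cycle | exact: log_prec_cycle].
Qed.

End Cycle.

Variables (N : nat) (byz : {set 'I_N}).
Hypothesis byz_small : 3 * #|byz| < N.

Lemma ordered_log_reachable s : reachable m chain byz s -> ordered_log s.
Proof.
elim=> {s} [|s1 s2 _ s1_ok step]; first by split.
case: s1 s2 / step s1_ok => [s i h lt_im|s prop Q Q_large honest_ok] s_ok.
  case: s_ok => recv_m *; split=> //= j k.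
  by rewrite in_cons => /predU1P[[-> _] //|/recv_m].
have [v vQ v_honest] := quorum_has_honest byz_small Q_large.
exact: ordered_log_after_cycle (honest_ok v vQ v_honest).
Qed.

End Haechi.

Theorem lemma2 (Tx : Type) (m : nat) (chain : nat -> nat -> CrossLink Tx)
    (N : nat) (byz : {set 'I_N}) :
  shard_chains_ok chain ->
  3 * #|byz| < N ->
  forall s : State, reachable m chain byz s ->
  forall (i1 h1 k1 i2 h2 k2 : nat),
    (i1, h1) \in recv s -> (i2, h2) \in recv s ->
    k1 < size (ltx (chain i1 h1)) -> k2 < size (ltx (chain i2 h2)) ->
    (blockTS (chain i1 h1) < blockTS (chain i2 h2) \/
     ((i1, h1) = (i2, h2) /\ k1 < k2)) ->
    (i2, h2, k2) \in log s ->
    (i1, h1, k1) \in log s /\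
    index (i1, h1, k1) (log s) < index (i2, h2, k2) (log s).
Proof.
move=> chain_ok byz_small s s_reach i1 h1 k1 i2 h2 k2 recv1 _ lt_k1 _ order y_log.
have s_ok := ordered_log_reachable chain_ok byz_small s_reach.
have xy : prec chain (i1, h1, k1) (i2, h2, k2).
  by rewrite /Defs.prec /=; case: order => [->//|[-> ->]]; rewrite eqxx orbT.
have lt_xy := log_prec s_ok y_log xy (recv_shard s_ok recv1) lt_k1.
by split=> //; rewrite -index_mem (leq_trans lt_xy) ?index_size.
Qed.
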